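(* Let $u,\phi_1,\dots,\phi_N$ solve the $n$-th KdV equation with self-consistent sources of degree $N$, let $\eta=-\frac12\alpha$, let $f_1,\dots,f_m$ satisfy the Lax pair $f_{j,xx}+(\lambda_{N+j}+u)f_j=0$, $f_{j,t}=Q^{(n,N)}f_j$ with spectral parameters $\lambda_{N+1},\dots,\lambda_{N+m}$ respectively, and let $\psi$ satisfy the Lax pair with spectral parameter $\lambda$. Define iterates by $f_j[0]=f_j$, $\psi[0]=\psi$ and, for $l\ge1$ and $g\in\{f_j,\psi\}$, $$g[l]=g[l-1]-\frac{f_l[l-1]}{1+\partial^{-1}(f_l[l-1]^2)}\,\partial^{-1}\big(f_l[l-1]\,g[l-1]\big).$$ Then for all integers $l,k$ with $1\le l\le m-1$ and $1\le k\le m-l$, $$W_1(f_{l+1}[l],\dots,f_{l+k}[l])=\frac{W_1(f_l[l-1],f_{l+1}[l-1],\dots,f_{l+k}[l-1])}{1+\partial^{-1}(f_l[l-1]^2)},$$ $$W_2(f_{l+1}[l],\dots,f_{l+k}[l],\psi[l])=\frac{W_2(f_l[l-1],f_{l+1}[l-1],\dots,f_{l+k}[l-1],\psi[l-1])}{1+\partial^{-1}(f_l[l-1]^2)}.$$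
   Context: Let $\partial=\partial/\partial x$ and $\partial^{-1}=\int_{-\infty}^x\cdot\,dx$; all functions of $(x,t)$ are smooth and decay as $x\to-\infty$ sufficiently fast that all integrals $\partial^{-1}(\cdot)$ appearing converge. For a potential $u(x,t)$ let $L=-\frac14\partial^2-u+\frac12\partial^{-1}u_x$, $b_0=0$, $b_1=1$, $b_{k+1}=Lb_k$ ($k\ge1$), $a_k=-\frac12 b_{k,x}$; write $b_k[u]$. Fix $n\ge0$, $t=t_n$, $A^{(n)}(u,\lambda)=\sum_{i=0}^{n+1}(a_i+b_i\partial)\lambda^{n+1-i}$. The $n$-th KdV equation with self-consistent sources of degree $N$ (constant $\alpha$, distinct constants $\lambda_j$) is $u_t=\partial\big[-2b_{n+2}[u]-2\alpha\sum_{j=1}^N\phi_j^2\big]$, $\phi_{j,xx}+(\lambda_j+u)\phi_j=0$. For a constant $\eta$ and spectral parameter $\lambda$, $Q^{(n,N)}\psi=A^{(n)}(u,\lambda)\psi+\eta\psi+\alpha\sum_{j=1}^N\phi_j\partial^{-1}(\phi_j\psi)$; the Lax pair with spectral parameter $\lambda$ is $\psi_{xx}+(\lambda+u)\psi=0$, $\psi_t=Q^{(n,N)}\psi$. The constants $\lambda_1,\dots,\lambda_{N+m}$ are distinct. For functions $g_1,\dots,g_k$: $W_1(g_1,\dots,g_k)=\det F$ with $F_{ij}=\delta_{ij}+\partial^{-1}(g_ig_j)$, $1\le i,j\le k$; and $W_2(g_1,\dots,g_k)=\det G$ with $G_{ij}=\delta_{ij}+\partial^{-1}(g_ig_j)$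 for $1\le i\le k-1$, $1\le j\le k$, and $G_{kj}=g_j$ for $1\le j\le k$. *)

From Stdlib Require Import Reals.
From Coquelicot Require Import Coquelicot.
From mathcomp Require Import all_boot all_algebra.
From mathcomp Require Import Rstruct.

Set Implicit Arguments.
Unset Strict Implicit.
Unset Printing Implicit Defensive.

Definition fun2 := R -> R -> R.

Local Open Scope R_scope.

Definition dx (F : fun2) : fun2 := fun x t => Derive (fun y => F y t) x.
Definition dt (F : fun2) : fun2 := fun x t => Derive (fun s => F x s) t.

Definition mul2 (F G : fun2) : fun2 := fun x t => F x t * G x t.

Definition pinv (F : fun2) : fun2 :=
  fun x t => RInt_gen (fun y => F y t) (Rbar_locally m_infty) (at_point x).

Definition ex_pinv (F : fun2) : Prop :=
  forall x t, ex_RInt_gen (fun y => F y t) (Rbar_locally m_infty) (at_point x).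

Fixpoint dword (w : list bool) (F : fun2) : fun2 :=
  match w with
  | nil => F
  | cons true w' => dx (dword w' F)
  | cons false w' => dt (dword w' F)
  end.

Definition smooth2 (F : fun2) : Prop :=
  forall (w : list bool) (x t : R),
    ex_derive (fun y => dword w F y t) x /\
    ex_derive (fun s => dword w F x s) t /\
    continuous (fun p : R * R => dword w F (fst p) (snd p)) (x, t).

Definition Lop (u b : fun2) : fun2 :=
  fun x t => - / 4 * dx (dx b) x t - u x t * b x t
             + / 2 * pinv (mul2 (dx u) b) x t.

Fixpoint bkdv (u : fun2) (k : nat) : fun2 :=
  match k with
  | O => fun _ _ => 0
  | S O => fun _ _ => 1
  | S k' => Lop u (bkdv u k')
  end.

Definition aseq (u : fun2) (k : nat) : fun2 := fun x t => - / 2 * dx (bkdv u k) x t.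

Fixpoint sumR (lo cnt : nat) (F : nat -> R) : R :=
  match cnt with
  | O => 0
  | S c => F lo + sumR (S lo) c F
  end.

Definition Aop (n : nat) (u : fun2) (lam : R) (psi : fun2) : fun2 :=
  fun x t => sumR 0 (n + 2)
    (fun i => (aseq u i x t * psi x t + bkdv u i x t * dx psi x t)
              * lam ^ (n + 1 - i)).

Definition Qop (n N : nat) (u : fun2) (phi : nat -> fun2) (alpha eta lam : R)
  (psi : fun2) : fun2 :=
  fun x t => Aop n u lam psi x t + eta * psi x t
             + alpha * sumR 1 N (fun j => phi j x t * pinv (mul2 (phi j) psi) x t).

Definition dstep (h g : fun2) : fun2 :=
  fun x t => g x t - h x t / (1 + pinv (mul2 h h) x t) * pinv (mul2 h g) x t.

Fixpoint fit (f : nat -> fun2) (l : nat) : nat -> fun2 :=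
  match l with
  | O => f
  | S l' => fun j => dstep (fit f l' (S l')) (fit f l' j)
  end.

Fixpoint pit (f : nat -> fun2) (psi : fun2) (l : nat) : fun2 :=
  match l with
  | O => psi
  | S l' => dstep (fit f l' (S l')) (pit f psi l')
  end.

Local Close Scope R_scope.
Local Open Scope ring_scope.

(* W_1(g_1,...,g_k) = det( delta_ij + \partial^{-1}(g_i g_j) ), with the
   family given 0-based: g_{i+1} = g i *)
Definition W1 (k : nat) (g : nat -> fun2) : fun2 :=
  fun x t => \det (\matrix_(i < k, j < k)
                     ((i == j)%:R + pinv (mul2 (g i) (g j)) x t) : 'M[R]_k).

Definition W2 (k : nat) (g : nat -> fun2) : fun2 :=
  fun x t => \det (\matrix_(i < k, j < k)
                     (if (i.+1 < k)%N
                      then (i == j)%:R + pinv (mul2 (g i) (g j)) x t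
                      else g j x t) : 'M[R]_k).

(* One Darboux step  g ~> g - h/(1 + d^-1(h^2)) d^-1(h g)  transforms the integrals
   d^-1(g1 g2) into their Schur complements: for the transformed functions
     d^-1(g1~ g2~) = d^-1(g1 g2) - d^-1(g1 h) d^-1(h g2) / (1 + d^-1(h^2)),
   because both sides have derivative g1~ g2~ and vanish at -oo.  Taking h = f_l[l-1],
   the matrices defining W_1 and W_2 at level l are therefore the Schur complements of
   the pivot 1 + d^-1(h^2) in the matrices at level l-1 (the last row of W_2 transforms
   like the functions themselves), and a determinant is its pivot times the determinant
   of the Schur complement. *)

From Stdlib Require Import Reals Lra FunctionalExtensionality.
From Coquelicot Require Import Coquelicot.
From mathcomp Require Import all_boot all_algebra zify.
From mathcomp Require Import Rstruct.

Import GRing.Theory.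

Local Open Scope R_scope.

Definition prim (F : R -> R) (x : R) : R :=
  RInt_gen F (Rbar_locally m_infty) (at_point x).

Definition ex_prim (F : R -> R) : Prop :=
  forall x, ex_RInt_gen F (Rbar_locally m_infty) (at_point x).

Section Primitive.

Variable F : R -> R.
Hypothesis F_cont : forall x, continuous F x.

Lemma prim_eq_antiderivative (G : R -> R) (x : R) :
  (forall y, is_derive G y (F y)) ->
  filterlim G (Rbar_locally m_infty) (locally 0) ->
  prim F x = G x.
Proof.
move=> dG G_lim.
have DG : Derive G = F.
  by apply: functional_extensionality => y; exact: is_derive_unique.
have everywhere (P : R -> Prop) : (forall y, P y) ->
    filter_prod (Rbar_locally m_infty) (at_point x)
      (fun ab : R * R => forall y, Rmin ab.1 ab.2 <= y <= Rmax ab.1 ab.2 -> P y).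
  move=> HP; apply: (Filter_prod _ _ _ (fun _ => True) (fun _ => True)) => //.
  by exists 0.
suff : is_RInt_gen (Derive G) (Rbar_locally m_infty) (at_point x) (G x - 0).
  by rewrite DG Rminus_0_r => /is_RInt_gen_unique.
apply: is_RInt_gen_Derive => //.
- by apply: everywhere => y; exists (F y).
- by rewrite DG; apply: everywhere.
- by move=> P /locally_singleton.
Qed.

Hypothesis F_int : ex_prim F.

Lemma is_RInt_gen_prim x : is_RInt_gen F (Rbar_locally m_infty) (at_point x) (prim F x).
Proof. rewrite /prim; apply (RInt_gen_correct (V := R_CompleteNormedModule)); exact: F_int. Qed.

Lemma prim_Chasles a b : prim F b = prim F a + RInt F a b.
Proof.
have F_ab : ex_RInt F a b by apply: ex_RInt_continuous => y _; exact: F_cont.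
have F_ab' := proj2 (is_RInt_gen_at_point F a b _) (RInt_correct _ _ _ F_ab).
exact: (is_RInt_gen_unique (V := R_CompleteNormedModule) _ _
          (is_RInt_gen_Chasles (Fa := Rbar_locally m_infty) F a _ _ (is_RInt_gen_prim a) F_ab')).
Qed.

Lemma is_derive_prim x : is_derive (prim F) x (F x).
Proof.
apply: (is_derive_ext (fun y => prim F 0 + RInt F 0 y)) => [y|].
  by rewrite -prim_Chasles.
rewrite -[F x]plus_zero_l; apply: is_derive_plus; first exact: is_derive_const.
apply: is_derive_RInt => //; apply: filter_forall => y.
by apply: RInt_correct; apply: ex_RInt_continuous => z _; exact: F_cont.
Qed.

Lemma continuous_prim x : continuous (prim F) x.
Proof. by apply: ex_derive_continuous; exists (F x); exact: is_derive_prim. Qed.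

Lemma prim_m_infty : filterlim (prim F) (Rbar_locally m_infty) (locally 0).
Proof.
have lim_RInt : filterlimi (fun a => is_RInt F a 0) (Rbar_locally m_infty)
                  (locally (prim F 0)).
  apply: (filterlimi_comp _ _ _ (fun a => (a, 0)) (fun ab => is_RInt F ab.1 ab.2)
            _ (filter_prod (Rbar_locally m_infty) (at_point 0))).
    apply: filterlim_pair; first exact: filterlim_id.
    by move=> P HP; rewrite /filtermap; apply: filter_forall => _.
  exact (is_RInt_gen_prim 0).
apply/filterlim_locally => eps.
apply: filter_imp (proj1 (filterlimi_locally _ _) lim_RInt eps) => a [z [Fz Hz]].
have -> : prim F a = prim F 0 - z.
  by rewrite (prim_Chasles a 0) (is_RInt_unique _ _ _ _ Fz); ring.
move: Hz; rewrite /ball /= /AbsRing_ball /abs /Hierarchy.minus /Hierarchy.plus /Hierarchy.opp /=.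
by rewrite -Rabs_Ropp; congr (Rabs _ < _); ring.
Qed.

Lemma prim_ge0 x : (forall y, 0 <= F y) -> 0 <= prim F x.
Proof.
move=> F_ge0.
have a_le_x : filter_prod (Rbar_locally m_infty) (at_point x) (fun ab : R * R => ab.1 <= ab.2).
  apply: (Filter_prod _ _ _ (fun a => a < x) (fun b => b = x)).
  - by exists x.
  - by [].
  - by move=> a b /= /Rlt_le ? ->.
have normF : filter_prod (Rbar_locally m_infty) (at_point x)
    (fun ab : R * R => forall y, ab.1 <= y <= ab.2 -> norm (F y) <= F y).
  apply: (Filter_prod _ _ _ (fun _ => True) (fun _ => True)) => // [|a b _ _ y _].
    by exists 0.
  by rewrite /norm /= /abs /= Rabs_pos_eq //; apply: Rle_refl.
have norm_le : Rabs (prim F x) <= prim F x.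
  by apply (RInt_gen_norm F F _ _ a_le_x normF); exact: is_RInt_gen_prim.
exact: Rle_trans (Rabs_pos _) norm_le.
Qed.

End Primitive.

Definition darboux (h g : R -> R) (y : R) : R :=
  g y - h y / (1 + prim (fun z => h z * h z) y) * prim (fun z => h z * g z) y.

Lemma continuous_mul (f g : R -> R) (x : R) :
  continuous f x -> continuous g x -> continuous (fun y => f y * g y) x.
Proof. exact: continuous_mult. Qed.

Lemma is_derive_prim_mul (f g : R -> R) (x : R) :
  (forall y, continuous f y) -> (forall y, continuous g y) -> ex_prim (fun z => f z * g z) ->
  is_derive (prim (fun z => f z * g z)) x (f x * g x).
Proof. by move=> f_cont g_cont fg_int; apply: is_derive_prim => // z; exact: continuous_mul. Qed.

Lemma prim_mul_m_infty (f g : R -> R) :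
  (forall y, continuous f y) -> (forall y, continuous g y) -> ex_prim (fun z => f z * g z) ->
  is_lim (prim (fun z => f z * g z)) m_infty 0.
Proof. by move=> f_cont g_cont fg_int; apply: prim_m_infty => // z; exact: continuous_mul. Qed.

Lemma darboux_den_ge1 (h : R -> R) (x : R) :
  ex_prim (fun z => h z * h z) -> 1 <= 1 + prim (fun z => h z * h z) x.
Proof.
move=> hh_int; suff : 0 <= prim (fun z => h z * h z) x by lra.
by apply: prim_ge0 => [|y]; [exact: hh_int | exact: Rle_0_sqr].
Qed.

Lemma darboux_den_neq0 (h : R -> R) (x : R) :
  ex_prim (fun z => h z * h z) -> 1 + prim (fun z => h z * h z) x <> 0.
Proof. by move=> /(darboux_den_ge1 h x); lra. Qed.

Lemma continuous_prim_mul (f g : R -> R) (x : R) :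
  (forall y, continuous f y) -> (forall y, continuous g y) -> ex_prim (fun z => f z * g z) ->
  continuous (prim (fun z => f z * g z)) x.
Proof. by move=> f_cont g_cont fg_int; apply: continuous_prim => // z; exact: continuous_mul. Qed.

Lemma continuous_darboux (h g : R -> R) (x : R) :
  (forall y, continuous h y) -> (forall y, continuous g y) ->
  ex_prim (fun z => h z * h z) -> ex_prim (fun z => h z * g z) ->
  continuous (darboux h g) x.
Proof.
move=> h_cont g_cont hh_int hg_int.
apply: continuous_minus => //; apply: continuous_mul; last exact: continuous_prim_mul.
apply: continuous_mul => //; apply: continuous_Rinv_comp; last exact: darboux_den_neq0.
by apply: continuous_plus; [exact: continuous_const | exact: continuous_prim_mul].
Qed.

Section DarbouxGram.

Variables h a b : R -> R.
Hypotheses (h_cont : forall y, continuous h y) (a_cont : forall y, continuous a y)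
           (b_cont : forall y, continuous b y).
Hypotheses (hh_int : ex_prim (fun z => h z * h z)) (ha_int : ex_prim (fun z => h z * a z))
           (hb_int : ex_prim (fun z => h z * b z)) (ab_int : ex_prim (fun z => a z * b z)).

Let D y := 1 + prim (fun z => h z * h z) y.

Let gram y := prim (fun z => a z * b z) y
              - prim (fun z => h z * a z) y * prim (fun z => h z * b z) y / D y.

Lemma is_derive_gram y : is_derive gram y (darboux h a y * darboux h b y).
Proof.
have D_neq0 : D y <> 0 by exact: darboux_den_neq0.
have dD : is_derive D y (h y * h y).
  rewrite -[h y * h y]plus_zero_l; apply: is_derive_plus; first exact: is_derive_const.
  exact: is_derive_prim_mul.
have dP := is_derive_mult _ _ y _ _ (is_derive_prim_mul h a y h_cont a_cont ha_int)
             (is_derive_prim_mul h b y h_cont b_cont hb_int) Rmult_comm.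
have := is_derive_minus _ _ y _ _ (is_derive_prim_mul a b y a_cont b_cont ab_int)
          (is_derive_div _ _ y _ _ dP dD D_neq0).
congr is_derive; move: D_neq0.
rewrite /darboux /D /Hierarchy.minus /Hierarchy.plus /Hierarchy.opp /mult /= => D_neq0.
by field.
Qed.

Lemma gram_m_infty : filterlim gram (Rbar_locally m_infty) (locally 0).
Proof.
have lim_D : is_lim D m_infty (1 + 0).
  exact: is_lim_plus' (is_lim_const 1 m_infty) (prim_mul_m_infty h h h_cont h_cont hh_int).
have lim_D_neq0 : Coquelicot.Rbar.Finite (1 + 0) <> Coquelicot.Rbar.Finite 0.
  by case; lra.
have lim_quot := is_lim_div _ _ m_infty _ _
  (is_lim_mult _ _ m_infty 0 0 (prim_mul_m_infty h a h_cont a_cont ha_int)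
                               (prim_mul_m_infty h b h_cont b_cont hb_int) I)
  lim_D lim_D_neq0 I.
have := is_lim_minus' _ _ m_infty _ _ (prim_mul_m_infty a b a_cont b_cont ab_int) lim_quot.
by rewrite /= Rmult_0_l Rmult_0_l Rminus_0_r.
Qed.

Lemma prim_darboux_mul x :
  prim (fun y => darboux h a y * darboux h b y) x
    = prim (fun z => a z * b z) x
      - prim (fun z => h z * a z) x * prim (fun z => h z * b z) x
        / (1 + prim (fun z => h z * h z) x).
Proof.
apply: (prim_eq_antiderivative _ _ gram) => [y|y|]; last exact: gram_m_infty.
- by apply: continuous_mul; exact: continuous_darboux.
- exact: is_derive_gram.
Qed.

End DarbouxGram.

Definition continuous_x (G : fun2) (t : R) : Prop := forall y, continuous (fun z => G z t) y.

Lemma mul2C (A B : fun2) : mul2 A B = mul2 B A.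
Proof.
by apply: functional_extensionality => x; apply: functional_extensionality => t; exact: Rmult_comm.
Qed.

Lemma continuous_x_dstep (H A : fun2) (t : R) :
  continuous_x H t -> continuous_x A t -> ex_pinv (mul2 H H) -> ex_pinv (mul2 H A) ->
  continuous_x (dstep H A) t.
Proof.
move=> H_cont A_cont HH_int HA_int y.
exact: continuous_darboux (fun x => HH_int x t) (fun x => HA_int x t).
Qed.

Lemma pinv_mul2_dstep (H A B : fun2) (x t : R) :
  continuous_x H t -> continuous_x A t -> continuous_x B t ->
  ex_pinv (mul2 H H) -> ex_pinv (mul2 H A) -> ex_pinv (mul2 H B) -> ex_pinv (mul2 A B) ->
  pinv (mul2 (dstep H A) (dstep H B)) x t
    = pinv (mul2 A B) x t
      - pinv (mul2 A H) x t * pinv (mul2 H B) x t / (1 + pinv (mul2 H H) x t).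
Proof.
move=> H_cont A_cont B_cont HH_int HA_int HB_int AB_int; rewrite (mul2C A H).
exact: (prim_darboux_mul (fun z => H z t) (fun z => A z t) (fun z => B z t)
         H_cont A_cont B_cont (fun x => HH_int x t) (fun x => HA_int x t)
         (fun x => HB_int x t) (fun x => AB_int x t)).
Qed.

Section Schur.

Local Open Scope ring_scope.

Lemma det_schur (F : fieldType) k (A : 'M[F]_k.+1) :
  A ord0 ord0 != 0 ->
  \det A = A ord0 ord0 * \det (\matrix_(i < k, j < k)
     (A (lift ord0 i) (lift ord0 j)
      - A (lift ord0 i) ord0 * A ord0 (lift ord0 j) / A ord0 ord0)).
Proof.
move=> A00_neq0.
have lift0E (i : 'I_k) : lift ord0 i = rshift 1 i by apply/val_inj.
have ord0E : ord0 = lshift k (0 : 'I_1) by apply/val_inj.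
set S := \matrix_(i < k, j < k) _.
pose L : 'M[F]_(1 + k) := block_mx 1 0 ((A ord0 ord0)^-1 *: dlsubmx (A : 'M_(1 + k))) 1.
pose U : 'M[F]_(1 + k) := block_mx (A ord0 ord0)%:M (ursubmx (A : 'M_(1 + k))) 0 S.
suff {1}-> : A = L *m U.
  by rewrite det_mulmx /L /U (@det_lblock _ 1 k) (@det_ublock _ 1 k) !det1 det_scalar1 !mul1r.
rewrite /L /U mulmx_block !mul1mx !mul0mx ?addr0 ?add0r -[LHS](@submxK _ 1 k 1 k); f_equal.
- by apply/matrixP => i j; rewrite !ord1 !mxE mulr1n ord0E.
- by rewrite -scalemxAl mul_mx_scalar scalerA mulVf // scale1r.
- apply/matrixP => i j; rewrite !mxE big_ord1 !mxE -ord0E !lift0E.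
  by rewrite [(A ord0 ord0)^-1 * _]mulrC mulrAC addrC subrK.
Qed.

End Schur.

Lemma W1_dstep k (G G' : nat -> fun2) (x t : R) :
  (forall j, (j < k)%N -> G' j = dstep (G 0%N) (G j.+1)) ->
  (forall j, (j <= k)%N -> continuous_x (G j) t) ->
  (forall i j, (i <= k)%N -> (j <= k)%N -> ex_pinv (mul2 (G i) (G j))) ->
  W1 k G' x t = W1 k.+1 G x t / (1 + pinv (mul2 (G 0%N) (G 0%N)) x t).
Proof.
move=> G'E G_cont G_int.
have /eqP D_neq0 : 1 + pinv (mul2 (G 0%N) (G 0%N)) x t <> 0.
  exact: darboux_den_neq0 (fun y => G_int 0%N 0%N isT isT y t).
rewrite /W1 det_schur ?mxE /=; last by [].
rewrite RdivE [X in (X / _)%R]mulrC mulfK //.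
congr (determinant _); apply/matrixP => i j.
rewrite !mxE (inj_eq (@lift_inj _ ord0)) [lift _ _ == _]eq_sym !eq_liftF !lift0 /=.
have [i_lt_k j_lt_k] := (ltn_ord i, ltn_ord j).
rewrite !add0r (G'E i i_lt_k) (G'E j j_lt_k) pinv_mul2_dstep.
  by rewrite !(RminusE, RmultE, RdivE, RplusE) addrA.
all: first [apply: (G_cont) | apply: (G_int)]; lia.
Qed.

Lemma W2_dstep k (G G' : nat -> fun2) (x t : R) :
  (forall j, (j <= k)%N -> G' j = dstep (G 0%N) (G j.+1)) ->
  (forall j, (j <= k.+1)%N -> continuous_x (G j) t) ->
  (forall i j, (i <= k)%N -> (j <= k.+1)%N -> ex_pinv (mul2 (G i) (G j))) ->
  W2 k.+1 G' x t = W2 k.+2 G x t / (1 + pinv (mul2 (G 0%N) (G 0%N)) x t).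
Proof.
move=> G'E G_cont G_int.
have /eqP D_neq0 : 1 + pinv (mul2 (G 0%N) (G 0%N)) x t <> 0.
  exact: darboux_den_neq0 (fun y => G_int 0%N 0%N isT isT y t).
rewrite /W2 [in RHS]det_schur ?mxE /=; last by [].
rewrite RdivE [X in (X / _)%R]mulrC mulfK //.
congr (determinant _); apply/matrixP => i j.
rewrite !mxE (inj_eq (@lift_inj _ ord0)) [lift _ _ == _]eq_sym !eq_liftF !lift0 /= !ltnS.
have j_le_k : (j <= k)%N by rewrite -ltnS.
rewrite (G'E j j_le_k); case: (ltnP i k) => [i_lt_k | _]; last first.
  by rewrite add0r /dstep !(RminusE, RmultE, RdivE, RplusE) mulrAC.
rewrite !add0r (G'E i (ltnW i_lt_k)) pinv_mul2_dstep.
  by rewrite !(RminusE, RmultE, RdivE, RplusE) addrA.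
all: first [apply: (G_cont) | apply: (G_int)]; lia.
Qed.

Lemma continuous_x_smooth2 (F : fun2) (t : R) : smooth2 F -> continuous_x F t.
Proof. by move=> F_smooth y; apply: ex_derive_continuous; case: (F_smooth nil y t). Qed.

Lemma continuous_x_iterates m (f : nat -> fun2) (psi : fun2) (t : R) :
  (forall j, (1 <= j <= m)%N -> smooth2 (f j)) -> smooth2 psi ->
  (forall l i j, (l < m)%N -> (1 <= i <= m)%N -> (1 <= j <= m)%N ->
     ex_pinv (mul2 (fit f l i) (fit f l j))) ->
  (forall l i, (l < m)%N -> (1 <= i <= m)%N -> ex_pinv (mul2 (fit f l i) (pit f psi l))) ->
  forall l, (l < m)%N ->
    (forall i, (1 <= i <= m)%N -> continuous_x (fit f l i) t) /\ continuous_x (pit f psi l) t.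
Proof.
move=> f_smooth psi_smooth ff_int fpsi_int; elim=> [|l IHl] l_lt_m.
  by split=> [i i_range|]; apply: continuous_x_smooth2; [exact: f_smooth | exact: psi_smooth].
have l_lt_m' : (l < m)%N := ltnW l_lt_m.
have [f_cont psi_cont] := IHl l_lt_m'.
have l1_range : (1 <= l.+1 <= m)%N by apply/andP.
split=> [i i_range|]; apply: continuous_x_dstep; auto.
Qed.

Theorem lemma5p1
  (n N m : nat) (alpha lambda : R) (lam : nat -> R)
  (u : fun2) (phi : nat -> fun2) (f : nat -> fun2) (psi : fun2)
  (* the constants lambda_1, ..., lambda_{N+m} are distinct *)
  (Hlam : forall i j : nat, (1 <= i <= N + m)%nat -> (1 <= j <= N + m)%nat ->
            i <> j -> lam i <> lam j)
  (* standing assumption: all functions of (x,t) are smooth *)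
  (Hsm_u : smooth2 u)
  (Hsm_phi : forall j, (1 <= j <= N)%nat -> smooth2 (phi j))
  (Hsm_f : forall j, (1 <= j <= m)%nat -> smooth2 (f j))
  (Hsm_psi : smooth2 psi)
  (Hsm_b : forall k, (k <= n + 2)%nat -> smooth2 (bkdv u k))
  (* standing assumption: the integrals \partial^{-1}(.) appearing converge *)
  (Hcv_b : forall k, (1 <= k <= n + 1)%nat -> ex_pinv (mul2 (dx u) (bkdv u k)))
  (Hcv_phif : forall i j, (1 <= i <= N)%nat -> (1 <= j <= m)%nat ->
                ex_pinv (mul2 (phi i) (f j)))
  (Hcv_phipsi : forall i, (1 <= i <= N)%nat -> ex_pinv (mul2 (phi i) psi))
  (Hcv_ff : forall l i j, (l < m)%nat -> (1 <= i <= m)%nat -> (1 <= j <= m)%nat ->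
              ex_pinv (mul2 (fit f l i) (fit f l j)))
  (Hcv_fpsi : forall l i, (l < m)%nat -> (1 <= i <= m)%nat ->
              ex_pinv (mul2 (fit f l i) (pit f psi l)))
  (* the n-th KdV equation with self-consistent sources of degree N *)
  (Hkdv : forall x t, dt u x t =
            dx (fun y s => -2 * bkdv u (n + 2) y s
                           - 2 * alpha * sumR 1 N (fun j => (phi j y s) ^ 2)) x t)
  (Hphi : forall j, (1 <= j <= N)%nat -> forall x t,
            dx (dx (phi j)) x t + (lam j + u x t) * phi j x t = 0)
  (* f_j satisfies the Lax pair with spectral parameter lambda_{N+j},
     eta = -alpha/2 *)
  (Hf_x : forall j, (1 <= j <= m)%nat -> forall x t,
            dx (dx (f j)) x t + (lam (N + j)%nat + u x t) * f j x t = 0)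
  (Hf_t : forall j, (1 <= j <= m)%nat -> forall x t,
            dt (f j) x t = Qop n N u phi alpha (- / 2 * alpha) (lam (N + j)%nat) (f j) x t)
  (* psi satisfies the Lax pair with spectral parameter lambda *)
  (Hpsi_x : forall x t, dx (dx psi) x t + (lambda + u x t) * psi x t = 0)
  (Hpsi_t : forall x t, dt psi x t = Qop n N u phi alpha (- / 2 * alpha) lambda psi x t) :
  forall (l k : nat), (1 <= l <= m - 1)%nat -> (1 <= k <= m - l)%nat ->
  forall x t : R,
    W1 k (fun i => fit f l (l + 1 + i)) x t
      = W1 (k + 1) (fun i => fit f (l - 1) (l + i)) x t
        / (1 + pinv (mul2 (fit f (l - 1) l) (fit f (l - 1) l)) x t)
    /\
    W2 (k + 1) (fun i => if (i < k)%N then fit f l (l + 1 + i) else pit f psi l) x t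
      = W2 (k + 2) (fun i => if (i < k + 1)%N then fit f (l - 1) (l + i)
                            else pit f psi (l - 1)) x t
        / (1 + pinv (mul2 (fit f (l - 1) l) (fit f (l - 1) l)) x t).
Proof.
move=> l k l_range k_range x t.
case: l l_range k_range => [|l] l_range k_range; first by lia.
have l_lt_m : (l < m)%N by lia.
have [f_cont psi_cont] := continuous_x_iterates _ _ _ t Hsm_f Hsm_psi Hcv_ff Hcv_fpsi l l_lt_m.
rewrite subSS subn0 !addn1 addn2.
split.
- rewrite (W1_dstep _ (fun i => fit f l (l.+1 + i))) ?addn0 //.
  + by move=> j _ /=; rewrite addSnnS.
  + by move=> j j_le; apply: f_cont; lia.
  + by move=> i j i_le j_le; apply: Hcv_ff; lia.
- rewrite (W2_dstep _ (fun i => if (i < k.+1)%N then fit f l (l.+1 + i)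
                                  else pit f psi l)) /= ?addn0 //.
  + move=> j j_le /=; rewrite ltnS; case: ifP => // _.
    by rewrite addSnnS.
  + move=> j j_le /=; case: ltnP => j_lt; last exact: psi_cont.
    by apply: f_cont; lia.
  + move=> i j i_le j_le /=; rewrite ifT; last lia.
    by case: ltnP => j_lt; [apply: Hcv_ff | apply: Hcv_fpsi]; lia.
Qed.
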